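(* Let $(X,\tau)$ be a locally convex Hausdorff space, $\widetilde{\tau}$ a locally convex Hausdorff topology on $X$, and suppose $(X,\widetilde{\gamma})$, $\widetilde{\gamma}=\widetilde{\gamma}(\tau,\widetilde{\tau})$, satisfies $(\mathrm{B}\tau\mathrm{B}\widetilde{\gamma})$. Then $(X,\widetilde{\gamma})$ is a semi-Montel space if and only if $(X,\tau)$ satisfies (BBC) for $\widetilde{\tau}$.
   Context: lcH = locally convex Hausdorff. (BBC) for $\widetilde{\tau}$: every $\tau$-bounded subset of $X$ is contained in an absolutely convex $\tau$-bounded $\widetilde{\tau}$-compact set. $\widetilde{\gamma}(\tau,\widetilde{\tau})$: the finest lcH topology on $X$ coinciding with $\widetilde{\tau}$ on all $\tau$-bounded sets; $(X,\widetilde{\gamma})$ satisfies $(\mathrm{B}\tau\mathrm{B}\widetilde{\gamma})$ if a subset of $X$ is $\tau$-bounded iff it is $\widetilde{\gamma}$-bounded. *)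

From HB Require Import structures.
From mathcomp Require Import all_boot all_order all_algebra.
From mathcomp Require Import all_classical all_reals.
Set Implicit Arguments. Unset Strict Implicit. Unset Printing Implicit Defensive.
Import Order.TTheory GRing.Theory Num.Theory.
Local Open Scope ring_scope.
Local Open Scope classical_set_scope.

Section LCH.
Variables (R : realType) (X : lmodType R).

Definition topology_on (O : set (set X)) : Prop :=
  [/\ O setT, O set0,
      (forall (I : Type) (U : I -> set X), (forall i, O (U i)) -> O (\bigcup_i U i))
    & (forall U V, O U -> O V -> O (U `&` V))].

Definition add_continuous (O : set (set X)) : Prop :=
  forall (x y : X) (W : set X), O W -> W (x + y) ->
    exists U V, [/\ O U, U x, O V, V y &
      forall u v, U u -> V v -> W (u + v)].

Definition scale_continuous (O : set (set X)) : Prop :=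
  forall (a : R) (x : X) (W : set X), O W -> W (a *: x) ->
    exists (e : R) (U : set X), [/\ 0 < e, O U, U x &
      forall (b : R) u, `|b - a| < e -> U u -> W (b *: u)].

Definition hausdorff_on (O : set (set X)) : Prop :=
  forall x y : X, x != y ->
    exists U V, [/\ O U, U x, O V, V y & U `&` V = set0].

Definition convex_set (A : set X) : Prop :=
  forall x y (l : R), A x -> A y -> 0 <= l -> l <= 1 ->
    A (l *: x + (1 - l) *: y).

Definition locally_convex_on (O : set (set X)) : Prop :=
  forall W, O W -> W 0 -> exists U, [/\ O U, U 0, convex_set U & U `<=` W].

Definition lcH (O : set (set X)) : Prop :=
  [/\ topology_on O, add_continuous O, scale_continuous O,
      hausdorff_on O & locally_convex_on O].

Definition bounded_in (O : set (set X)) (B : set X) : Prop :=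
  forall U, O U -> U 0 ->
    exists s : R, 0 < s /\ forall t : R, s < t -> B `<=` [set t *: u | u in U].

Definition abs_convex (A : set X) : Prop :=
  forall x y (a b : R), A x -> A y -> `|a| + `|b| <= 1 -> A (a *: x + b *: y).

Definition compact_in (O : set (set X)) (K : set X) : Prop :=
  forall (I : Type) (U : I -> set X), (forall i, O (U i)) ->
    K `<=` \bigcup_i U i ->
    exists D : set I, finite_set D /\ K `<=` \bigcup_(i in D) U i.

Definition closure_in (O : set (set X)) (A : set X) : set X :=
  [set x | forall U, O U -> U x -> U `&` A !=set0].

Definition coincide_on (O1 O2 : set (set X)) (B : set X) : Prop :=
  (forall U, O1 U -> exists V, O2 V /\ U `&` B = V `&` B) /\
  (forall V, O2 V -> exists U, O1 U /\ U `&` B = V `&` B).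

Definition finer (O1 O2 : set (set X)) : Prop := forall U, O2 U -> O1 U.

Definition is_gamma (t tt g : set (set X)) : Prop :=
  [/\ lcH g,
      (forall B, bounded_in t B -> coincide_on g tt B)
    & (forall g', lcH g' -> (forall B, bounded_in t B -> coincide_on g' tt B) ->
         finer g g')].

Definition BtauBg (t g : set (set X)) : Prop :=
  forall B, bounded_in t B <-> bounded_in g B.

Definition semi_montel (O : set (set X)) : Prop :=
  lcH O /\ forall B, bounded_in O B -> compact_in O (closure_in O B).

Definition BBC (t tt : set (set X)) : Prop :=
  forall B, bounded_in t B ->
    exists K, [/\ B `<=` K, abs_convex K, bounded_in t K & compact_in tt K].

End LCH.

From mathcomp Require Import all_boot all_order all_algebra.
From mathcomp Require Import all_classical all_reals.
From mathcomp Require Import ring lra.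
From mathcomp Require finmap.
Set Implicit Arguments. Unset Strict Implicit. Unset Printing Implicit Defensive.
Import Order.TTheory GRing.Theory Num.Theory.
Local Open Scope ring_scope.
Local Open Scope classical_set_scope.

(* The bounded sets of tau and gamma~ coincide, and on each of them gamma~ and
   tau~ induce the same topology, hence the same compact subsets.
   If gamma~ is semi-Montel, the gamma~-closure of the absolutely convex hull
   of a tau-bounded set is absolutely convex, bounded and gamma~-compact, hence
   tau~-compact: this is (BBC).  Conversely a gamma~-bounded set lies in a
   tau-bounded, tau~-compact, hence gamma~-compact set K; as gamma~ is
   Hausdorff, K is closed, so the closure of the set is a closed subset of K
   and therefore compact. *)

Section TopologyOn.
Variables (R : realType) (X : lmodType R) (O : set (set X)).
Hypotheses (topO : topology_on O) (addO : add_continuous O)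
  (scaleO : scale_continuous O) (hausO : hausdorff_on O)
  (convO : locally_convex_on O).

Lemma open_setT : O setT. Proof. by case: topO. Qed.

Lemma open_set0 : O set0. Proof. by case: topO. Qed.

Lemma open_setI U V : O U -> O V -> O (U `&` V).
Proof. by case: topO => _ _ _; apply. Qed.

Lemma open_locally A : (forall x, A x -> exists U, [/\ O U, U x & U `<=` A]) ->
  O A.
Proof.
move=> Aloc.
have /choice [U Ux] : forall x : X, exists U : set X,
    [/\ A x -> U x, O U & U `<=` A].
  move=> x; case: (pselect (A x)) => [/Aloc [U [OU Ux UA]]|nAx].
    by exists U.
  by exists set0; split => //; exact: open_set0.
have -> : A = \bigcup_x U x.
  apply/seteqP; split => [x Ax|x [y _ Uyx]].
    by exists x => //; case: (Ux x) => + _ _; apply.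
  by case: (Ux y) => _ _; apply.
by case: topO => _ _ + _; apply => x; case: (Ux x).
Qed.

Lemma open_preimage_addr v W : O W -> O [set u | W (u + v)].
Proof.
move=> OW; apply: open_locally => x Wxv.
have [U [V [OU Ux _ Vv UV]]] := addO OW Wxv.
by exists U; split => // u Uu; exact: UV.
Qed.

Lemma open_preimage_scale a W : O W -> O [set u | W (a *: u)].
Proof.
move=> OW; apply: open_locally => x Wax.
have [e [U [e0 OU Ux aU]]] := scaleO OW Wax.
by exists U; split => // u Uu; apply: aU => //; rewrite subrr normr0.
Qed.

Lemma open_nbhd_sub_seq (I : eqType) (U : I -> set X) (s : seq I) x :
  {in s, forall i, O (U i) /\ U i x} ->
  exists N, [/\ O N, N x & {in s, forall i, N `<=` U i}].
Proof.
elim: s => [|a s IH] Us; first by exists setT; split => //; exact: open_setT.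
have [N [ON Nx NU]] : exists N, [/\ O N, N x & {in s, forall i, N `<=` U i}].
  by apply: IH => i si; apply: Us; rewrite inE si orbT.
have [OUa Uax] := Us a (mem_head a s).
exists (N `&` U a); split; [exact: open_setI | by [] |].
by move=> i; rewrite inE => /orP [/eqP -> | si] y [Ny Uy] //; exact: NU.
Qed.

Lemma open_setC_closure A : O (~` closure_in O A).
Proof.
apply: open_locally => x nAx.
have [V [OV Vx VA]] : exists V, [/\ O V, V x & ~ (V `&` A !=set0)].
  apply: contrapT => noV; apply: nAx => V OV Vx; apply: contrapT => VA.
  by apply: noV; exists V.
by exists V; split => // y Vy Ay; apply: VA; exact: Ay.
Qed.

Lemma compact_in_separated K x : compact_in O K -> ~ K x ->
  exists N, [/\ O N, N x & N `&` K = set0].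
Proof.
move=> cK Kx.
have /choice [P Psep] : forall k : X, exists P : set X * set X,
    [/\ O P.1, O P.2, P.1 x, K k -> P.2 k & P.1 `&` P.2 = set0].
  move=> k; case: (pselect (K k)) => Kk.
    have /hausO [U [V [OU Ux OV Vk UV]]] : x != k.
      by apply: contra_notN Kx => /eqP ->.
    by exists (U, V).
  exists (setT, set0); split => //=; last exact: setI0.
    exact: open_setT.
  exact: open_set0.
have [D [fD KD]] : exists D, finite_set D /\ K `<=` \bigcup_(k in D) (P k).2.
  apply: cK => [k|k Kk]; first by case: (Psep k).
  by exists k => //; case: (Psep k) => _ _ _ + _; apply.
have [F DF] := finite_fsetP.1 fD.
have [N [ON Nx NP]] :
    exists N, [/\ O N, N x & {in finmap.enum_fset F, forall k, N `<=` (P k).1}].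
  by apply: open_nbhd_sub_seq => k _; case: (Psep k).
exists N; split => //; apply/seteqP; split => // y [Ny Ky].
have [k Dk Pky] := KD y Ky.
case: (Psep k) => _ _ _ _ <-; split => //.
by apply: NP Ny; move: Dk; rewrite DF.
Qed.

Lemma closure_in_sub_compact K B : compact_in O K -> B `<=` K ->
  closure_in O B `<=` K.
Proof.
move=> cK BK x Bx; apply: contrapT => Kx.
have [N [ON Nx NK]] := compact_in_separated cK Kx.
have [y [Ny By]] := Bx N ON Nx.
have : (N `&` K) y by split => //; exact: BK.
by rewrite NK.
Qed.

Lemma compact_in_closure_sub K A : compact_in O K -> closure_in O A `<=` K ->
  compact_in O (closure_in O A).
Proof.
move=> cK AK I U OU AU.
pose V (j : option I) := if j is Some i then U i else ~` closure_in O A.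
have [D [fD KD]] : exists D, finite_set D /\ K `<=` \bigcup_(j in D) V j.
  apply: cK => [[i|]|k Kk] /=; [exact: OU|exact: open_setC_closure|].
  case: (pselect (closure_in O A k)) => [/AU [i _ Uik]|nAk].
    by exists (Some i).
  by exists None.
exists (Some @^-1` D); split; first by apply: finite_preimage => // ? ? _ _ [].
by move=> c Ac; have [[i|] Dj Vjc] := KD c (AK c Ac); [exists i | ].
Qed.

Lemma closure_in_abs_convex A : abs_convex A -> abs_convex (closure_in O A).
Proof.
move=> acA x y a b Ax Ay ab W OW Wxy.
have [P [Q [OP Pax OQ Qby PQ]]] := addO OW Wxy.
have [x' [Px' Ax']] := Ax _ (open_preimage_scale a OP) Pax.
have [y' [Qy' Ay']] := Ay _ (open_preimage_scale b OQ) Qby.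
by exists (a *: x' + b *: y'); split; [exact: PQ|exact: acA].
Qed.

Lemma closure_in_bounded B : bounded_in O B -> bounded_in O (closure_in O B).
Proof.
move=> bB U OU U0.
have U00 : U (0 + 0) by rewrite addr0.
have [U1 [U2 [OU1 U10 OU2 U20 U12]]] := addO OU U00.
have [s [s0 sB]] := bB U2 OU2 U20.
exists s; split => // r sr x Bx.
have r0 : r != 0 by rewrite gt_eqF // (lt_trans s0).
(* N = x - r U1 meets B in some c = r u with u in U2, so that
   x / r = (x - c) / r + u lies in U1 + U2 <= U *)
pose N := [set y | U1 ((- r^-1) *: y + r^-1 *: x)].
have ON : O N by exact: open_preimage_scale (open_preimage_addr _ OU1).
have Nx : N x by rewrite /N /= scaleNr addNr.
have [c [Nc Bc]] := Bx N ON Nx.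
have [u U2u cu] := sB r sr c Bc.
exists (r^-1 *: x); last by rewrite scalerA divff // scale1r.
have -> : r^-1 *: x = ((- r^-1) *: c + r^-1 *: x) + u.
  by rewrite -cu scalerA mulNr mulVf // scaleN1r addrC addNKr.
exact: U12.
Qed.

Definition abs_convex_hull (B : set X) : set X :=
  [set x | forall A, abs_convex A -> B `<=` A -> A x].

Lemma abs_convex_hull_abs_convex B : abs_convex (abs_convex_hull B).
Proof.
by move=> x y a b Bx By ab A acA BA; apply: acA (Bx A acA BA) (By A acA BA) ab.
Qed.

Lemma sub_abs_convex_hull B : B `<=` abs_convex_hull B.
Proof. by move=> x Bx A _; apply. Qed.

Lemma abs_convex_scale (r : R) (W : set X) :
  abs_convex W -> abs_convex [set r *: w | w in W].
Proof.
move=> acW _ _ a b [w1 W1 <-] [w2 W2 <-] ab.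
exists (a *: w1 + b *: w2); first exact: acW.
by rewrite scalerDr !scalerA (mulrC r a) (mulrC r b).
Qed.

Definition balanced_core (V : set X) : set X :=
  [set x | forall c : R, `|c| <= 1 -> V (c *: x)].

Lemma balanced_core_sub V : balanced_core V `<=` V.
Proof. by move=> x /(_ 1); rewrite normr1 scale1r; apply. Qed.

Lemma convex_balanced_core_comb V w1 w2 a b : convex_set V ->
  balanced_core V w1 -> balanced_core V w2 -> `|a| + `|b| <= 1 ->
  V (a *: w1 + b *: w2).
Proof.
move=> cV W1 W2 ab.
have [a0|a0] := eqVneq a 0.
  by rewrite a0 scale0r add0r; apply: W2; move: ab; rewrite a0 normr0 add0r.
have [b0|b0] := eqVneq b 0.
  by rewrite b0 scale0r addr0; apply: W1; move: ab; rewrite b0 normr0 addr0.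
have pa : 0 < `|a| by rewrite normr_gt0.
have pb : 0 < `|b| by rewrite normr_gt0.
set S := `|a| + `|b|; have S0 : 0 < S by rewrite /S; lra.
(* a w1 + b w2 is the convex combination, with weight l = |a| / S, of two
   points (a / l) w1 and (b / (1 - l)) w2 whose scalars have norm S <= 1 *)
pose l := `|a| / S.
have l0 : 0 < l by rewrite /l divr_gt0.
have l1E : 1 - l = `|b| / S by rewrite /l /S; field; rewrite gt_eqF.
have l1 : 0 < 1 - l by rewrite l1E divr_gt0.
have -> : a *: w1 + b *: w2 =
    l *: ((a / l) *: w1) + (1 - l) *: ((b / (1 - l)) *: w2).
  by rewrite !scalerA (mulrC l) (mulrC (1 - l)) !divfK // gt_eqF.
apply: cV; [apply: W1|apply: W2|lra|lra].
- rewrite normf_div (ger0_norm (ltW l0)) /l.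
  by have -> : `|a| / (`|a| / S) = S by field; rewrite !gt_eqF.
- rewrite normf_div (ger0_norm (ltW l1)) l1E.
  by have -> : `|b| / (`|b| / S) = S by field; rewrite !gt_eqF.
Qed.

Lemma abs_convex_balanced_core V : convex_set V -> abs_convex (balanced_core V).
Proof.
move=> cV x y a b Wx Wy ab c c1; rewrite scalerDr !scalerA.
apply: convex_balanced_core_comb => //; rewrite !normrM.
by have := normr_ge0 c; have := normr_ge0 a; have := normr_ge0 b; nra.
Qed.

Lemma nbhd0_abs_convex_sub U : O U -> U 0 ->
  exists2 W, abs_convex W /\ W `<=` U & exists U' (e : R),
    [/\ 0 < e, O U', U' 0 & [set e *: u | u in U'] `<=` W].
Proof.
move=> OU U0.
have [V [OV V0 cV VU]] := convO OU U0.
have V00 : V (0 *: (0 : X)) by rewrite scaler0.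
have [e [U' [e0 OU' U'0 eU']]] := scaleO OV V00.
exists (balanced_core V).
  split; first exact: abs_convex_balanced_core.
  by move=> x /balanced_core_sub; exact: VU.
exists U', (e / 2); split => //; first by lra.
move=> _ [u U'u <-] c c1; rewrite scalerA; apply: eU' => //.
rewrite subr0 normrM (ger0_norm (_ : 0 <= e / 2)); last by lra.
by have := normr_ge0 c; nra.
Qed.

Lemma bounded_in_absorbed B W U' e : bounded_in O B -> O U' -> U' 0 ->
  0 < e -> [set e *: u | u in U'] `<=` W ->
  exists2 s : R, 0 < s & forall r, s < r -> B `<=` [set r *: w | w in W].
Proof.
move=> bB OU' U'0 e0 eU'W.
have [s [s0 sB]] := bB U' OU' U'0.
exists (s / e); first exact: divr_gt0.
move=> r sr x Bx.
have [u U'u <-] : [set (r * e) *: u | u in U'] x.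
  by apply: (sB (r * e)) Bx; rewrite -ltr_pdivrMr.
by exists (e *: u); [apply: eU'W; exists u | rewrite scalerA].
Qed.

Lemma bounded_abs_convex_hull B : bounded_in O B ->
  bounded_in O (abs_convex_hull B).
Proof.
move=> bB U OU U0.
have [W [acW WU] [U' [e [e0 OU' U'0 eU'W]]]] := nbhd0_abs_convex_sub OU U0.
have [s s0 sB] := bounded_in_absorbed bB OU' U'0 e0 eU'W.
exists s; split => // r sr x Bx.
have [w Ww <-] := Bx _ (abs_convex_scale (r := r) acW) (sB r sr).
by exists w => //; exact: WU.
Qed.

End TopologyOn.

Lemma compact_in_trace (R : realType) (X : lmodType R) (O1 O2 : set (set X)) K :
  (forall V, O2 V -> exists U, O1 U /\ U `&` K = V `&` K) ->
  compact_in O1 K -> compact_in O2 K.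
Proof.
move=> tr cK I V OV KV.
have /choice [U UV] : forall i, exists U, O1 U /\ U `&` K = V i `&` K.
  by move=> i; exact: tr.
have [D [fD KD]] : exists D, finite_set D /\ K `<=` \bigcup_(i in D) U i.
  apply: cK => [i|k Kk]; first by case: (UV i).
  have [i _ Vik] := KV k Kk; exists i => //.
  by have : (V i `&` K) k by []; rewrite -(UV i).2 => -[].
exists D; split => // k Kk; have [i Di Uik] := KD k Kk.
by exists i => //; have : (U i `&` K) k by []; rewrite (UV i).2 => -[].
Qed.

Theorem corollary3p14 (R : realType) (X : lmodType R)
    (t tt g : set (set X)) :
  lcH t -> lcH tt -> is_gamma t tt g -> BtauBg t g ->
  (semi_montel g <-> BBC t tt).
Proof.
move=> _ _ [[topg addg scaleg hausg convg] gtt _] tg.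
have trace_tt K : bounded_in t K -> compact_in g K -> compact_in tt K.
  by move=> tK; apply: compact_in_trace; case: (gtt K tK).
have trace_g K : bounded_in t K -> compact_in tt K -> compact_in g K.
  move=> tK; apply: compact_in_trace => V gV.
  by have [U [ttU /esym]] := (gtt K tK).1 V gV; exists U.
split=> [[_ montel] B tB | bbc].
- set K := closure_in g (abs_convex_hull B).
  have gA : bounded_in g (abs_convex_hull B).
    exact/bounded_abs_convex_hull/tg.
  have tK : bounded_in t K by apply/tg/closure_in_bounded.
  exists K; split => //; last exact: trace_tt tK (montel _ gA).
  + by move=> x Bx U _ Ux; exists x; split => //; exact: sub_abs_convex_hull.
  + exact: closure_in_abs_convex (abs_convex_hull_abs_convex (B := B)).
- split => // B /(tg B).2 tB.
  have [K [BK _ tK ttK]] := bbc B tB.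
  have gK := trace_g K tK ttK.
  exact: compact_in_closure_sub gK (closure_in_sub_compact topg hausg gK BK).
Qed.
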